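(* Let $H<G$ and $H'<G'$ be countable abelian groups such that all elements of $G/H$ and of $G'/H'$ have odd order, and suppose $r:H\to H'$ is an isomorphism. Let $\|\cdot\|_H$ be a proper norm on $H$ and $\|\cdot\|_{H'}=\|r^{-1}(\cdot)\|_H$ the induced norm on $H'$. Suppose there are one-step ascending chains $\mathcal L=\{G_0<G_1<\cdots\}$ and $\mathcal L'=\{G'_0<G'_1<\cdots\}$ associated to $H$ and $H'$ respectively with equal sequences of indexes. Let $d_G$ and $d_{G'}$ be the pseudo-ultrametrics generated by $(\|\cdot\|_H,\mathcal L)$ and $(\|\cdot\|_{H'},\mathcal L')$ (with any admissible sequences $\{K_n\}$, $\{K'_n\}$). Then $(G,d_G)$ and $(G',d_{G'})$ are coarsely equivalent, and the coarse equivalence can be chosen to be bijective.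
   Context: Proper norm: $\|g\|=0$ iff $g=0$, $\|-g\|=\|g\|$, subadditive, finite balls. One-step ascending chain of a countable locally finite group $Q$: $\{0\}=Q_0<Q_1<\cdots$, $\bigcup Q_i=Q$, with $q_i$ such that $Q_i=\langle q_1,\dots,q_i\rangle$ and $q_{i+1}\notin Q_i$; the chain associated to $H$ is $G_i=\pi^{-1}(Q_i)$ ($\pi:G\to G/H$), with generators $g_i\in\pi^{-1}(q_i)$ and indexes $m_i=[G_i:G_{i-1}]=2k_i+1$. Every $g\in G$ has a unique representation $g=h_g+\sum r_ig_i$ with $h_g\in H$, $r_i\in[-k_i,k_i]\cap\mathbb Z$, almost all zero. Given positive $K_n$ strictly increasing to $\infty$ with $K_n\ge\sum_{i=1}^n(n-i+1)\|h_{m_ig_i}\|_H$ (admissible), the pseudo-ultrametric generated is $d_G(x,y)=\|y-x\|_G$ where $\|g\|_G=\|h_g\|_H+\|\pi(\sum r_ig_i)\|_{G/H}$ and $\|x\|_{G/H}=K_i$ for $x\in Q_i\setminus Q_{i-1}$, $\|0\|_{G/H}=0$. A coarse equivalence is a map $f$ such that for each $\delta$ there is $\epsilon$ with $d(x,y)\le\delta\Rightarrow d(f x,f y)\le\epsilon$, with a map $g$ of the same kind such that $fg$, $gf$ are at bounded distance from the identities. *)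

From HB Require Import structures.
From mathcomp Require Import all_boot all_order all_algebra.
From mathcomp Require Import reals.
From Stdlib Require Import ClassicalEpsilon.
Set Implicit Arguments. Unset Strict Implicit. Unset Printing Implicit Defensive.
Import Order.TTheory GRing.Theory Num.Theory.
Local Open Scope ring_scope.

Definition countable_type (T : Type) : Prop := exists f : T -> nat, injective f.

Definition subgroup (G : zmodType) (H : G -> Prop) : Prop :=
  H 0 /\ forall x y, H x -> H y -> H (x - y).

Definition odd_order_mod (G : zmodType) (H : G -> Prop) (x : G) : Prop :=
  exists n : nat, (0 < n)%N /\ H (x *+ n) /\
    (forall k : nat, (0 < k < n)%N -> ~ H (x *+ k)) /\ odd n.

Definition iso_on (G G' : zmodType) (H : G -> Prop) (H' : G' -> Prop)
  (r : G -> G') : Prop :=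
  (forall x, H x -> H' (r x)) /\
  (forall x y, H x -> H y -> r (x + y) = r x + r y) /\
  (forall x y, H x -> H y -> r x = r y -> x = y) /\
  (forall y, H' y -> exists2 x, H x & r x = y).

Definition proper_norm (R : realType) (G : zmodType) (H : G -> Prop)
  (nH : G -> R) : Prop :=
  (forall x, H x -> (nH x = 0 <-> x = 0)) /\
  (forall x, H x -> nH (- x) = nH x) /\
  (forall x y, H x -> H y -> nH (x + y) <= nH x + nH y) /\
  (forall rho : R, exists s : seq G, forall x, H x -> nH x <= rho -> x \in s).

(* G_i = pi^{-1}(<q_1,...,q_i>) where q_j = pi(g_j); G_0 = H. *)
Definition chain_level (G : zmodType) (H : G -> Prop) (g : nat -> G) (i : nat)
  : G -> Prop :=
  fun x => exists c : nat -> int, H (x - \sum_(1 <= j < i.+1) g j *~ c j).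

Definition one_step_chain (G : zmodType) (H : G -> Prop) (g : nat -> G) : Prop :=
  (forall i : nat, ~ chain_level H g i (g i.+1)) /\
  (forall x, exists i, chain_level H g i x).

Definition has_index (G : zmodType) (A B : G -> Prop) (n : nat) : Prop :=
  exists f : 'I_n -> G, (forall k, A (f k)) /\
    (forall a, A a -> exists! k, B (a - f k)).

(* k_i with m_i = 2 k_i + 1 *)
Definition half_range (m : nat -> nat) (i : nat) : nat := ((m i).-1)./2.

Definition chain_repr (G : zmodType) (H : G -> Prop) (g : nat -> G)
  (m : nat -> nat) (x h : G) : Prop :=
  H h /\ exists (r : nat -> int) (N : nat),
    (forall i, (N <= i)%N -> r i = 0) /\
    (forall i, (1 <= i)%N -> `|r i| <= (half_range m i)%:Z) /\
    x = h + \sum_(1 <= i < N) g i *~ r i.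

Definition hpart (G : zmodType) (H : G -> Prop) (g : nat -> G)
  (m : nat -> nat) (x : G) : G :=
  epsilon (inhabits 0) (fun h => chain_repr H g m x h).

(* The norm on G/H, lifted to G: K_i on G_i \ G_{i-1} (i >= 1), 0 on H. *)
Definition quot_norm (R : realType) (G : zmodType) (H : G -> Prop)
  (g : nat -> G) (K : nat -> R) (x : G) : R :=
  epsilon (inhabits 0) (fun v =>
    (H x /\ v = 0) \/
    exists i : nat, (1 <= i)%N /\ chain_level H g i x /\
      ~ chain_level H g i.-1 x /\ v = K i).

Definition gnorm (R : realType) (G : zmodType) (H : G -> Prop) (g : nat -> G)
  (m : nat -> nat) (nH : G -> R) (K : nat -> R) (x : G) : R :=
  nH (hpart H g m x) + quot_norm H g K (x - hpart H g m x).

Definition gdist (R : realType) (G : zmodType) (H : G -> Prop) (g : nat -> G)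
  (m : nat -> nat) (nH : G -> R) (K : nat -> R) (x y : G) : R :=
  gnorm H g m nH K (y - x).

Definition admissible (R : realType) (G : zmodType) (H : G -> Prop)
  (g : nat -> G) (m : nat -> nat) (nH : G -> R) (K : nat -> R) : Prop :=
  (forall n, (1 <= n)%N -> 0 < K n) /\
  (forall n, (1 <= n)%N -> K n < K n.+1) /\
  (forall M : R, exists n, (1 <= n)%N /\ M < K n) /\
  (forall n, (1 <= n)%N ->
     \sum_(1 <= i < n.+1) (n - i + 1)%:R * nH (hpart H g m (g i *+ m i)) <= K n).

Definition coarse_map (R : realType) (X Y : Type) (dX : X -> X -> R)
  (dY : Y -> Y -> R) (f : X -> Y) : Prop :=
  forall delta : R, exists eps : R, forall x y,
    dX x y <= delta -> dY (f x) (f y) <= eps.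

Definition coarse_equivalence (R : realType) (X Y : Type) (dX : X -> X -> R)
  (dY : Y -> Y -> R) (f : X -> Y) : Prop :=
  coarse_map dX dY f /\
  exists h : Y -> X, coarse_map dY dX h /\
    (exists C : R, forall x, dX (h (f x)) x <= C) /\
    (exists C : R, forall y, dY (f (h y)) y <= C).

(* Since every element of [G/H] has odd order and the chain is one-step, [g_i] has order
   [m_i = 2 k_i + 1] modulo [G_(i-1)], so every [x] is uniquely [h + \sum r_i g_i] with [h] in
   [H] and balanced digits [|r_i| <= k_i].  The indexes being equal,
   [h + \sum r_i g_i |-> r h + \sum r_i g'_i] is a bijection [G -> G'], inverse to the same
   construction built from [r^-1].  It is coarse: a [d_G]-ball lies in some [G_n] and has finitely
   many [H]-components, and adding [z] in [G_n] to [x] only changes the digits of [x] up to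
   level [n], so [f (x + z) - f x] takes finitely many values. *)

From Pilot Require Import Defs.
From HB Require Import structures.
From mathcomp Require Import all_boot all_order all_algebra.
From mathcomp Require Import reals.
From mathcomp Require Import zify lra.
From Stdlib Require Import ClassicalEpsilon Classical.
Set Implicit Arguments. Unset Strict Implicit. Unset Printing Implicit Defensive.
Import Order.TTheory GRing.Theory Num.Theory.
Local Open Scope ring_scope.

Section Subgroup.
Variables (G : zmodType) (P : G -> Prop).
Hypothesis sP : subgroup P.

Lemma subgroup0 : P 0. Proof. by case: sP. Qed.

Lemma subgroupB x y : P x -> P y -> P (x - y). Proof. by case: sP => _; apply. Qed.

Lemma subgroupN x : P x -> P (- x).
Proof. by move=> Px; rewrite -sub0r; apply: subgroupB => //; apply: subgroup0. Qed.

Lemma subgroupD x y : P x -> P y -> P (x + y).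
Proof. by move=> Px Py; rewrite -[y]opprK; apply/subgroupB/subgroupN. Qed.

Lemma subgroupMz x z : P x -> P (x *~ z).
Proof.
move=> Px; have PMn n : P (x *+ n).
  elim: n => [|n IH]; first by rewrite mulr0n; apply: subgroup0.
  by rewrite mulrS; apply: subgroupD.
by case: z => n; [apply: PMn | rewrite NegzE mulrNz; apply/subgroupN/PMn].
Qed.

Lemma subgroupDr x y : P y -> P (x + y) <-> P x.
Proof.
move=> Py; split=> [Pxy|Px]; last exact: subgroupD.
by rewrite -(addrK y x); apply: subgroupB.
Qed.

End Subgroup.

Lemma ex_least (P : nat -> Prop) n : P n -> exists k, P k /\ forall j, (j < k)%N -> ~ P j.
Proof.
move=> Pn; apply: NNPP => none.
suff: forall k j, (j <= k)%N -> ~ P j by move/(_ n n (leqnn n)).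
elim=> [|k IH] j le Pj; apply: none; exists j; split=> // i lt Pi.
  by move: lt; rewrite ltnNge (leq_trans le).
by apply: (IH i) => //; rewrite -ltnS (leq_trans lt).
Qed.

Lemma int_euclid (z : int) (o : nat) : (0 < o)%N ->
  exists (q : int) (r : 'I_o), z = q * o%:Z + (r : nat)%:Z.
Proof.
move=> o0; have o0' : o%:Z != 0 by rewrite eqz_nat -lt0n.
have r0 := modz_ge0 z o0'; have ro := ltz_mod z o0'.
have rlt : (`|(z %% o)%Z| < o)%N by lia.
by exists (z %/ o)%Z, (Ordinal rlt); rewrite /= gez0_abs // -divz_eq.
Qed.

Lemma dvdz_small_eq0 (d : nat) (z : int) : `|z| < d%:Z -> (d%:Z %| z)%Z -> z = 0.
Proof.
move=> lt dz; apply/eqP; rewrite -absz_eq0 -leqn0 leqNgt; apply/negP => z0.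
by have := dvdn_leq z0 dz; lia.
Qed.

Section Period.
Variables (G : zmodType) (P : G -> Prop) (a : G).
Hypothesis sP : subgroup P.

Lemma subgroup_period N : (0 < N)%N -> P (a *+ N) ->
  exists2 o, (o %| N)%N & forall z : int, P (a *~ z) <-> (o%:Z %| z)%Z.
Proof.
move=> N0 PN.
have [o [[o0 Po] omin]] := @ex_least (fun j => 0 < j /\ P (a *+ j))%N N (conj N0 PN).
have Pz z : P (a *~ z) <-> (o%:Z %| z)%Z.
  have [q [r ->]] := int_euclid z o0.
  have -> : P (a *~ (q * o%:Z + r%:Z)) <-> P (a *+ r).
    rewrite mulrzDr addrC -pmulrn; apply: (subgroupDr sP).
    by rewrite mulrC mulrzA; apply: (subgroupMz sP); exact: Po.
  rewrite rpredDl ?dvdz_mull //; change (P (a *+ r) <-> (o %| r)%N).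
  have [-> | r0] := posnP r; first by rewrite dvdn0 mulr0n; split=> // _; apply: subgroup0.
  split=> [Pr | /(dvdn_leq r0)]; last by rewrite leqNgt ltn_ord.
  by exfalso; apply: (omin r (ltn_ord r)).
by exists o => //; apply/(Pz N).
Qed.

Variables (Q : G -> Prop) (M o : nat).
Hypothesis o0 : (0 < o)%N.
Hypothesis Pa : forall z : int, P (a *~ z) <-> (o%:Z %| z)%Z.
Hypothesis QP : forall x, Q x <-> exists t, P (x - a *~ t).

Lemma subgroup_reduce x : Q x -> exists t : 'I_o, P (x - a *+ t).
Proof.
case/QP=> z Pz; have [q [r ez]] := int_euclid z o0; exists r.
have -> : x - a *+ r = (x - a *~ z) + a *~ (q * o%:Z).
  by rewrite ez mulrzDr -pmulrn opprD addrA addrAC subrK.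
by apply: subgroupD => //; apply/Pa/dvdz_mull.
Qed.

(* The cosets of [P] in [Q = P + <a>] are those of [0, a, ..., (o-1) a]. *)
Lemma index_period : has_index Q P M -> M = o.
Proof.
case=> f [Qf uniqf].
have Qat (t : nat) : Q (a *+ t) by apply/QP; exists (t%:Z); rewrite pmulrn subrr; apply: subgroup0.
have phiP (t : 'I_o) : exists k, P (a *+ t - f k).
  by have [k [Pk _]] := uniqf _ (Qat t); exists k.
have psiP (k : 'I_M) : exists t : 'I_o, P (f k - a *+ t) by apply/subgroup_reduce/Qf.
have [phi phiE] := choice _ phiP; have [psi psiE] := choice _ psiP.
apply/eqP; rewrite eqn_leq; apply/andP; split.
- have /leq_card : injective psi.
    move=> k1 k2 e; have := subgroupB sP (psiE k1) (psiE k2).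
    rewrite e opprB addrA subrK => P12.
    have [k [_ uk]] := uniqf _ (Qf k1).
    by rewrite -(uk k1) ?(uk k2) // subrr; apply: subgroup0.
  by rewrite !card_ord.
- have /leq_card : injective phi.
    move=> t1 t2 e; have := subgroupB sP (phiE t1) (phiE t2).
    rewrite e opprB addrA subrK !pmulrn -mulrzBr => /Pa d.
    apply: val_inj; apply/eqP; rewrite -eqz_nat -subr_eq0.
    by apply/eqP/(dvdz_small_eq0 _ d); have := ltn_ord t1; have := ltn_ord t2; lia.
  by rewrite !card_ord.
Qed.
End Period.

Lemma half_rangeE (m : nat -> nat) i : odd (m i) -> (2 * half_range m i + 1)%N = m i.
Proof.
rewrite /half_range addn1 mul2n.
by case: (m i) => //= M /negPf oM; rewrite halfK oM subn0.
Qed.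

Lemma balanced_residue (k : nat) (t : int) :
  exists d : int, `|d| <= k%:Z /\ ((2 * k + 1)%:Z %| t - d)%Z.
Proof.
have [q [r ->]] := @int_euclid t (2 * k + 1) (ltac:(by rewrite addn1)).
have [rk | kr] := leqP r k.
  by exists (r%:Z); split; [lia | rewrite -addrA subrr addr0 dvdz_mull].
exists (r%:Z - (2 * k + 1)%:Z); split; first by have := ltn_ord r; lia.
by rewrite opprB -addrA subrKC -[X in _ + X]mul1r -mulrDl dvdz_mull.
Qed.

Definition lincomb (G : zmodType) (g : nat -> G) (c : nat -> int) (n : nat) : G :=
  \sum_(1 <= j < n) g j *~ c j.

Section LinearCombination.
Variables (G : zmodType) (g : nat -> G).

Lemma lincombS c n : (1 <= n)%N -> lincomb g c n.+1 = lincomb g c n + g n *~ c n.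
Proof. by move=> n1; rewrite /lincomb big_nat_recr. Qed.

Lemma lincomb_le1 c n : (n <= 1)%N -> lincomb g c n = 0.
Proof. by move=> n1; rewrite /lincomb big_geq. Qed.

Lemma lincomb0 n : lincomb g (fun=> 0) n = 0.
Proof. by rewrite /lincomb big1 // => i _; rewrite mulr0z. Qed.

Lemma eq_lincomb c c' n :
  (forall i, (1 <= i < n)%N -> c i = c' i) -> lincomb g c n = lincomb g c' n.
Proof. by move=> e; apply: eq_big_nat => i /e ->. Qed.

Lemma lincombD c c' n : lincomb g (fun i => c i + c' i) n = lincomb g c n + lincomb g c' n.
Proof. by rewrite /lincomb -big_split; apply: eq_bigr => i _; rewrite mulrzDr. Qed.

Lemma lincombB c c' n : lincomb g (fun i => c i - c' i) n = lincomb g c n - lincomb g c' n.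
Proof. by rewrite /lincomb -sumrB; apply: eq_bigr => i _; rewrite mulrzBr. Qed.

Lemma lincomb_pad c n p : (n <= p)%N -> (forall i, (n <= i)%N -> c i = 0) ->
  lincomb g c n = lincomb g c p.
Proof.
move=> np c0; rewrite /lincomb; have [n0 | n1] := leqP n 1.
  rewrite big_geq // big1_seq // => i /andP [_].
  by rewrite mem_index_iota => /andP [i1 _]; rewrite c0 ?mulr0z // (leq_trans n0).
rewrite (@big_cat_nat _ _ _ n 1 p _ _ (ltnW n1) np) /=.
rewrite [X in _ + X]big1_seq ?addr0 // => i /andP [_].
by rewrite mem_index_iota => /andP [ni _]; rewrite c0 // mulr0z.
Qed.

Lemma lincomb_eq c c' n n' :
  (forall i, (n <= i)%N -> c i = 0) -> (forall i, (n' <= i)%N -> c' i = 0) ->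
  (forall i, (1 <= i)%N -> c i = c' i) -> lincomb g c n = lincomb g c' n'.
Proof.
move=> c0 c'0 cc'; rewrite (@lincomb_pad c n (maxn n n')) ?leq_maxl //.
rewrite (@lincomb_pad c' n' (maxn n n')) ?leq_maxr //.
by apply: eq_lincomb => i /andP [i1 _]; apply: cc'.
Qed.

End LinearCombination.

Section ChainLevel.
Variables (G : zmodType) (H : G -> Prop) (g : nat -> G).
Hypothesis sH : subgroup H.
Local Notation L := (chain_level H g).

Lemma chain_levelE i x : L i x <-> exists c, H (x - lincomb g c i.+1).
Proof. by []. Qed.

Lemma chain_level0 x : L 0 x <-> H x.
Proof.
rewrite chain_levelE; split=> [[c] | Hx]; last by exists (fun=> 0); rewrite lincomb_le1 ?subr0.
by rewrite lincomb_le1 ?subr0.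
Qed.

Lemma chain_levelS i x : L i.+1 x <-> exists t, L i (x - g i.+1 *~ t).
Proof.
split=> [/chain_levelE [c Hc] | [t /chain_levelE [c Hc]]].
  by exists (c i.+1); apply/chain_levelE; exists c; rewrite lincombS // opprD addrA addrAC in Hc.
apply/chain_levelE; exists (fun j => if j == i.+1 then t else c j); rewrite lincombS //.
rewrite eqxx (@eq_lincomb _ _ _ c); first by rewrite opprD addrA addrAC.
by move=> j /andP [_ ji]; rewrite ltn_eqF.
Qed.

Lemma chain_level_subgroup i : subgroup (L i).
Proof.
split=> [|x y /chain_levelE [c Hc] /chain_levelE [c' Hc']]; apply/chain_levelE.
  by exists (fun=> 0); rewrite lincomb0 subr0; apply: subgroup0.
exists (fun j => c j - c' j); rewrite lincombB.
suff -> : forall a b : G, x - y - (a - b) = (x - a) - (y - b) by apply: subgroupB.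
by move=> a b; rewrite opprB [in RHS]opprB addrACA [in RHS]addrACA; congr (_ + _); apply: addrC.
Qed.

Lemma chain_level_le i j x : (i <= j)%N -> L i x -> L j x.
Proof.
move=> /subnK <-; elim: (j - i)%N => // k IH /IH Lx; rewrite addSn.
by apply/chain_levelS; exists 0; rewrite mulr0z subr0.
Qed.

Lemma chain_level_H i x : H x -> L i x.
Proof. by move/chain_level0; apply: chain_level_le. Qed.

Lemma chain_level_lincomb c i : L i (lincomb g c i.+1).
Proof.
elim: i => [|i IH]; first by rewrite lincomb_le1 //; apply/chain_level0; apply: subgroup0.
by apply/chain_levelS; exists (c i.+1); rewrite lincombS // addrK.
Qed.

End ChainLevel.

Definition digit_seq (m : nat -> nat) (c : nat -> int) (N : nat) : Prop :=
  (forall i, (N <= i)%N -> c i = 0) /\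
  (forall i, (1 <= i)%N -> `|c i| <= (half_range m i)%:Z).

Section Digits.
Variables (G : zmodType) (H : G -> Prop) (g : nat -> G) (m : nat -> nat).
Hypothesis sH : subgroup H.
Hypothesis Hodd : forall x, odd_order_mod H x.
Hypothesis index_m : forall i, (1 <= i)%N ->
  has_index (chain_level H g i) (chain_level H g i.-1) (m i).
Local Notation L := (chain_level H g).

(* The index [m i] of [L i.-1] in [L i] is the order of [g i] modulo [L i.-1], which
   divides its (odd) order modulo [H]. *)
Lemma chain_level_period n :
  odd (m n.+1) /\ forall z : int, L n (g n.+1 *~ z) <-> ((m n.+1)%:Z %| z)%Z.
Proof.
have [N [N0 [HN [_ oddN]]]] := Hodd (g n.+1).
have sL := chain_level_subgroup g sH n.
have [o oN Lo] := subgroup_period sL N0 (chain_level_H g n HN).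
have o0 : (0 < o)%N by apply: dvdn_gt0 oN.
rewrite (index_period sL o0 Lo (@chain_levelS _ _ g n) (index_m (ltn0Sn n))).
by split=> //; apply: dvdn_odd oN oddN.
Qed.

Lemma chain_repr_exists n x : L n x ->
  exists h c, [/\ H h, digit_seq m c n.+1 & x = h + lincomb g c n.+1].
Proof.
elim: n x => [|n IH] x.
  move/(@chain_level0 _ _ g)=> Hx; exists x, (fun=> 0).
  by split; rewrite ?lincomb0 ?addr0 //; split=> i _; rewrite ?normr0.
case/(@chain_levelS _ _ g) => t Lt; have [oddm Lm] := chain_level_period n.
have [d [dk]] := balanced_residue (half_range m n.+1) t; rewrite half_rangeE // => /Lm Ld.
have /IH [h [c [Hh [c0 ck] ex]]] : L n (x - g n.+1 *~ d).
  by move: (subgroupD (chain_level_subgroup g sH n) Lt Ld); rewrite mulrzBr addrA subrK.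
exists h, (fun j => if j == n.+1 then d else c j); split=> //.
  split=> i i1; case: eqP => [ei|_]; [lia | by rewrite c0 // ltnW | by rewrite ei | exact: ck].
rewrite lincombS // eqxx (@eq_lincomb _ _ _ c); first by rewrite addrA -ex subrK.
by move=> j /andP [_ jn]; rewrite ltn_eqF.
Qed.

Lemma lincomb_H_eq0 n e :
  (forall i, (1 <= i)%N -> `|e i| < (m i)%:Z) ->
  H (lincomb g e n.+1) -> forall i, (1 <= i <= n)%N -> e i = 0.
Proof.
move=> e_small; elim: n => [|n IH] He i; first by lia.
have [oddm Lm] := chain_level_period n.
have en0 : e n.+1 = 0.
  apply: (dvdz_small_eq0 (d := m n.+1)); first exact: e_small.
  apply/Lm; have := subgroupB (chain_level_subgroup g sH n) (chain_level_H g n He)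
    (chain_level_lincomb g sH e n).
  by rewrite lincombS // addrC addKr.
rewrite lincombS // en0 mulr0z addr0 in He.
move=> /andP [i1]; rewrite leq_eqVlt ltnS => /orP [/eqP -> // | ni].
by apply: IH; rewrite ?i1.
Qed.

Lemma chain_repr_uniq h1 c1 N1 h2 c2 N2 : H h1 -> H h2 ->
  digit_seq m c1 N1 -> digit_seq m c2 N2 ->
  h1 + lincomb g c1 N1 = h2 + lincomb g c2 N2 ->
  h1 = h2 /\ forall i, (1 <= i)%N -> c1 i = c2 i.
Proof.
move=> Hh1 Hh2 [c10 c1k] [c20 c2k]; set N := maxn N1 N2.
rewrite (@lincomb_pad _ _ c1 N1 N.+1) ?(@lincomb_pad _ _ c2 N2 N.+1) //; try lia.
move=> e; have Hc : H (lincomb g (fun i => c1 i - c2 i) N.+1).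
  rewrite lincombB (_ : _ - _ = h2 - h1); first exact: subgroupB.
  by apply: (addrI h1); rewrite addrA e addrK addrC subrK.
have c12 i : (1 <= i)%N -> c1 i = c2 i.
  move=> i1; have [iN | Ni] := leqP i N; last by rewrite c10 ?c20 //; lia.
  apply/eqP; rewrite -subr_eq0; apply/eqP; apply: (lincomb_H_eq0 _ Hc); last by rewrite i1.
  move=> j j1; have := c1k j j1; have := c2k j j1.
  case: j j1 => // j _; have [oddm _] := chain_level_period j; have := half_rangeE oddm; lia.
split=> //; move: e; rewrite (@eq_lincomb _ _ c1 c2) => [/addIr // | j /andP [j1 _]].
exact: c12.
Qed.

End Digits.

(* Sends [h + \sum c_i g_i] to [r h + \sum c_i g'_i]; well defined by [chain_repr_uniq]. *)
Definition chain_transfer (G G' : zmodType) (H : G -> Prop) (g : nat -> G)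
  (m : nat -> nat) (g' : nat -> G') (r : G -> G') (x : G) : G' :=
  epsilon (inhabits 0) (fun y => exists h c N,
    [/\ H h, digit_seq m c N, x = h + lincomb g c N & y = r h + lincomb g' c N]).

Section Transfer.
Variables (G G' : zmodType) (H : G -> Prop) (g : nat -> G) (m : nat -> nat).
Variables (g' : nat -> G') (r : G -> G').
Hypothesis sH : subgroup H.
Hypothesis Hodd : forall x, odd_order_mod H x.
Hypothesis index_m : forall i, (1 <= i)%N ->
  has_index (chain_level H g i) (chain_level H g i.-1) (m i).
Local Notation f := (chain_transfer H g m g' r).

Lemma hpartE h c N x : H h -> digit_seq m c N -> x = h + lincomb g c N -> hpart H g m x = h.
Proof.
move=> Hh dc ex; have : chain_repr H g m x (hpart H g m x).
  by apply: (epsilon_spec _ (chain_repr H g m x)); exists h; split=> //; exists c, N; case: dc.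
case=> Hp [c' [N' [c'0 [c'k ex']]]].
by case: (chain_repr_uniq sH Hodd index_m Hp Hh (conj c'0 c'k) dc (etrans (esym ex') ex)) => ->.
Qed.

Lemma chain_transferE h c N x : H h -> digit_seq m c N -> x = h + lincomb g c N ->
  f x = r h + lincomb g' c N.
Proof.
move=> Hh dc ex; have : exists h2 c2 N2, [/\ H h2, digit_seq m c2 N2,
    x = h2 + lincomb g c2 N2 & f x = r h2 + lincomb g' c2 N2].
  apply: (epsilon_spec _ (fun y => exists h c N, [/\ H h, digit_seq m c N,
    x = h + lincomb g c N & y = r h + lincomb g' c N])).
  by exists (r h + lincomb g' c N), h, c, N.
case=> h2 [c2 [N2 [Hh2 dc2 ex2 ->]]].
have [-> cc2] := chain_repr_uniq sH Hodd index_m Hh2 Hh dc2 dc (etrans (esym ex2) ex).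
by congr (_ + _); apply: lincomb_eq; [case: dc2 | case: dc | ].
Qed.

Lemma chain_transfer_split (rD : forall x y, H x -> H y -> r (x + y) = r x + r y)
    n v h c N : chain_level H g n v -> H h -> digit_seq m c N ->
  (forall i, (i <= n)%N -> c i = 0) ->
  f (h + v + lincomb g c N) = r h + f v + lincomb g' c N.
Proof.
move=> Lv Hh [c0 ck] clow.
have [hv [d [Hhv [d0 dk] ev]]] := chain_repr_exists sH Hodd index_m Lv.
set P := maxn N n.+1; have digits_dc : digit_seq m (fun i => d i + c i) P.
  split=> i iP; first by rewrite d0 ?c0 ?addr0 //; lia.
  have [le | gt] := leqP i n; first by rewrite clow // addr0; apply: dk.
  by rewrite d0 ?add0r //; apply: ck.
have lcP : lincomb g (fun i => d i + c i) P = lincomb g d n.+1 + lincomb g c N.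
  by rewrite lincombD -(@lincomb_pad _ _ d n.+1 P) -?(@lincomb_pad _ _ c N P) //; lia.
have lc'P : lincomb g' (fun i => d i + c i) P = lincomb g' d n.+1 + lincomb g' c N.
  by rewrite lincombD -(@lincomb_pad _ _ d n.+1 P) -?(@lincomb_pad _ _ c N P) //; lia.
rewrite (chain_transferE Hhv (conj d0 dk) ev).
rewrite (@chain_transferE (h + hv) _ P _ (subgroupD sH Hh Hhv) digits_dc).
  by rewrite rD // lc'P !addrA.
by rewrite lcP ev !addrA.
Qed.

End Transfer.

Definition int_range (k : nat) : seq int := [seq i%:Z - k%:Z | i <- iota 0 (2 * k + 1)].

Lemma int_rangeP k (d : int) : `|d| <= k%:Z -> d \in int_range k.
Proof.
move=> dk; apply/mapP; exists (absz (d + k%:Z)); first by rewrite mem_iota; lia.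
by lia.
Qed.

Fixpoint digit_sums (G : zmodType) (g : nat -> G) (m : nat -> nat) (n : nat) : seq G :=
  if n is n'.+1 then
    [seq v + g n *~ d | v <- digit_sums g m n', d <- int_range (half_range m n)]
  else [:: 0].

Lemma digit_sumsP (G : zmodType) (g : nat -> G) m n c :
  (forall i, (1 <= i)%N -> `|c i| <= (half_range m i)%:Z) ->
  lincomb g c n.+1 \in digit_sums g m n.
Proof.
move=> ck; elim: n => [|n IH]; first by rewrite lincomb_le1 ?inE.
by rewrite lincombS //; apply: allpairs_f => //; apply/int_rangeP/ck.
Qed.

Lemma seq_ub (T : eqType) (R : realType) (s : seq T) (F : T -> R) :
  exists C, forall t, t \in s -> F t <= C.
Proof.
elim: s => [|a s [C hC]]; first by exists 0.
exists (Num.max (F a) C) => t; rewrite inE => /orP [/eqP -> | ts].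
  by rewrite le_max lexx.
by rewrite le_max hC ?orbT.
Qed.

Lemma proper_norm_ge0 (R : realType) (G : zmodType) (H : G -> Prop) (nH : G -> R) :
  subgroup H -> proper_norm H nH -> forall x, H x -> 0 <= nH x.
Proof.
move=> sH [n0 [nN [nD _]]] x Hx; have := nD x (- x) Hx (subgroupN sH Hx).
by rewrite addrN nN // (proj2 (n0 0 (subgroup0 sH)) erefl); lra.
Qed.

Section Coarse.
Variables (G G' : zmodType) (H : G -> Prop) (g : nat -> G) (m : nat -> nat).
Variables (g' : nat -> G') (r : G -> G').
Hypothesis sH : subgroup H.
Hypothesis Hodd : forall x, odd_order_mod H x.
Hypothesis index_m : forall i, (1 <= i)%N ->
  has_index (chain_level H g i) (chain_level H g i.-1) (m i).
Hypothesis levels_cover : forall x, exists i, chain_level H g i x.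
Local Notation L := (chain_level H g).

Lemma chain_decomp n x : exists h v c N, [/\ H h, v \in digit_sums g m n /\ L n v,
  digit_seq m c N, (forall i, (i <= n)%N -> c i = 0) & x = h + v + lincomb g c N].
Proof.
have [j /(chain_repr_exists sH Hodd index_m) [h [c [Hh [c0 ck] ex]]]] := levels_cover x.
pose low i := if (i <= n)%N then c i else 0.
pose high i := if (i <= n)%N then 0 else c i.
exists h, (lincomb g low n.+1), high, j.+1; split=> //.
- split; last exact: (chain_level_lincomb g sH).
  by apply: digit_sumsP => i i1; rewrite /low; case: ifP => _; [apply: ck | rewrite normr0].
- split=> i i1; rewrite /high; case: ifP => _ //; [apply: c0 | apply: ck] => //.
- by move=> i i_n; rewrite /high i_n.
rewrite ex -addrA; congr (_ + _).
rewrite (@lincomb_pad _ _ low n.+1 (maxn n.+1 j.+1)) ?leq_maxl //; last first.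
  by move=> i ni; rewrite /low ifN // -ltnNge.
rewrite [in RHS](@lincomb_pad _ _ high j.+1 (maxn n.+1 j.+1)) ?leq_maxr //; last first.
  by move=> i ji; rewrite /high; case: ifP => // _; apply: c0.
rewrite -lincombD (@lincomb_pad _ _ c j.+1 (maxn n.+1 j.+1)) ?leq_maxr //.
by apply: eq_lincomb => i _; rewrite /low /high; case: ifP; rewrite ?addr0 ?add0r.
Qed.

Variables (R : realType) (nH : G -> R) (K : nat -> R).
Hypothesis nH_proper : proper_norm H nH.
Hypothesis K_admissible : admissible H g m nH K.

Lemma quot_norm_spec w j : L j w -> (H w /\ quot_norm H g K w = 0) \/
  exists2 i, (1 <= i)%N & L i w /\ quot_norm H g K w = K i.
Proof.
move=> Lw; have [i0 [Li0 i0_min]] := @ex_least (L^~ w) j Lw.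
have : (H w /\ quot_norm H g K w = 0) \/ exists i, (1 <= i)%N /\ L i w /\
    ~ L i.-1 w /\ quot_norm H g K w = K i.
  apply: (epsilon_spec _ (fun v => (H w /\ v = 0) \/ exists i, (1 <= i)%N /\ L i w /\
    ~ L i.-1 w /\ v = K i)).
  case: i0 Li0 i0_min => [/(@chain_level0 _ _ g) Hw _ | i Li i_min]; first by exists 0; left.
  by exists (K i.+1); right; exists i.+1; do ![split=> //]; apply: i_min.
by case=> [// | [i [i1 [Li [_ ->]]]]]; [left | right; exists i].
Qed.

Lemma K_le a b : (1 <= a)%N -> (a <= b)%N -> K a <= K b.
Proof.
move=> a1 ab; apply: (@homo_leq_in _ [pred n | 0 < n]%N K <=%R lexx le_trans) => //.
- by move=> i j /= i0 _ k /andP [ik _]; apply: leq_trans ik.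
- by move=> i /= i0 _; case: K_admissible => _ [K_incr _]; apply/ltW/K_incr.
- exact: leq_trans ab.
Qed.

Lemma gnorm_ball delta : exists n (s : seq G), forall z,
  Defs.gnorm H g m nH K z <= delta -> L n z /\ hpart H g m z \in s.
Proof.
have [K_gt0 [_ [K_unbounded _]]] := K_admissible.
have [N [N1 deltaN]] := K_unbounded delta; have [s s_ball] := nH_proper.2.2.2 delta.
exists N, s => z.
have [j /(chain_repr_exists sH Hodd index_m) [h [c [Hh dc ez]]]] := levels_cover z.
rewrite /Defs.gnorm (hpartE sH Hodd index_m Hh dc ez).
have Lw : L j (z - h) by rewrite ez addrC addKr; exact: (chain_level_lincomb g sH).
have ezh : z = h + (z - h) by rewrite addrC subrK.
have LN_z w : L N w -> L N (h + w).
  by apply: (subgroupD (chain_level_subgroup g sH N)); exact: chain_level_H.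
have nHh := proper_norm_ge0 sH nH_proper Hh.
case: (quot_norm_spec Lw) => [[Hw ->] | [i i1 [Li ->]]] le_delta.
  rewrite addr0 in le_delta; rewrite ezh.
  by split; [apply: LN_z; exact: chain_level_H | apply: s_ball].
have Ki := K_gt0 _ i1; split; last by apply: s_ball => //; lra.
rewrite ezh; apply: LN_z; apply: (chain_level_le _ Li); rewrite leqNgt; apply/negP => Ni.
by have := K_le N1 (ltnW Ni); lra.
Qed.

Local Notation f := (chain_transfer H g m g' r).

Lemma chain_transfer_coarse (rD : forall x y, H x -> H y -> r (x + y) = r x + r y)
    (H' : G' -> Prop) (nH' : G' -> R) (K' : nat -> R) :
  coarse_map (gdist H g m nH K) (gdist H' g' m nH' K') f.
Proof.
move=> delta; have [n [s s_ball]] := gnorm_ball delta.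
set Z := [seq h + u | h <- s, u <- digit_sums g m n].
have [C C_ub] := seq_ub [seq (u, z) | u <- digit_sums g m n, z <- Z]
  (fun p => Defs.gnorm H' g' m nH' K' (f (p.1 + p.2) - f p.1)).
exists C => x y; rewrite /gdist; have -> : y = x + (y - x) by rewrite addrC subrK.
move: (y - x) => z; rewrite addrAC subrr add0r => /s_ball [Lz hz_s].
have [hz [c [Hhz [c0 ck] ez]]] := chain_repr_exists sH Hodd index_m Lz.
have zZ : z \in Z.
  rewrite ez; apply: allpairs_f; last exact: digit_sumsP.
  by rewrite -(hpartE sH Hodd index_m Hhz (conj c0 ck) ez).
have [h [u [c' [N [Hh [uD Lu] dc' c'low ex]]]]] := chain_decomp n x.
have -> : x + z = h + (u + z) + lincomb g c' N by rewrite ex addrAC !addrA.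
have Luz : L n (u + z) by apply: (subgroupD (chain_level_subgroup g sH n)).
rewrite ex !(chain_transfer_split g' sH Hodd index_m rD _ Hh dc' c'low) //.
rewrite (addrAC (r h)) [in X in _ - X](addrAC (r h)) [r h + _ + _]addrC addrKA.
exact: (C_ub (u, z) (allpairs_f _ uD zZ)).
Qed.

End Coarse.

Section IsoOn.
Variables (G G' : zmodType) (H : G -> Prop) (H' : G' -> Prop) (r : G -> G').
Hypotheses (sH : subgroup H) (iso : iso_on H H' r).

Lemma iso_on0 : r 0 = 0.
Proof.
case: iso => _ [rD _]; apply: (@addIr _ (r 0)).
by rewrite -rD ?addr0 ?add0r //; apply: subgroup0.
Qed.

Lemma iso_onN x : H x -> r (- x) = - r x.
Proof.
case: iso => _ [rD _] Hx; apply: (@addIr _ (r x)).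
by rewrite -rD ?addNr ?iso_on0 //; apply: subgroupN.
Qed.

Lemma iso_on_inv : exists s : G' -> G, [/\ iso_on H' H s,
  forall x, H x -> s (r x) = x & forall y, H' y -> r (s y) = y].
Proof.
case: iso => rH [rD [r_inj r_surj]].
have [s sP] : exists s : G' -> G, forall y, H' y -> H (s y) /\ r (s y) = y.
  exists (fun y => epsilon (inhabits 0) (fun x => H x /\ r x = y)) => y /r_surj [x Hx rx].
  by apply: (epsilon_spec _ (fun x => H x /\ r x = y)); exists x.
have srK x : H x -> s (r x) = x by move=> Hx; have [Hs /r_inj] := sP _ (rH _ Hx); apply.
exists s; split=> // [|y /sP []//]; split; first by move=> y /sP [].
split.
  move=> y1 y2 /sP [H1 e1] /sP [H2 e2].
  by rewrite -{1}e1 -{1}e2 -rD // srK //; apply: subgroupD.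
split; first by move=> y1 y2 /sP [_ e1] /sP [_ e2] e12; rewrite -e1 -e2 e12.
by move=> x Hx; exists (r x); [apply: rH | apply: srK].
Qed.

End IsoOn.

Lemma proper_norm_transport (R : realType) (G G' : zmodType) (H : G -> Prop)
    (H' : G' -> Prop) (r : G -> G') (nH : G -> R) (nH' : G' -> R) :
  subgroup H -> iso_on H H' r -> proper_norm H nH ->
  (forall x, H x -> nH' (r x) = nH x) -> proper_norm H' nH'.
Proof.
move=> sH iso [n0 [nN [nD nball]]] nr; have [rH [rD [r_inj r_surj]]] := iso.
split; first move=> _ /r_surj [x Hx <-].
  rewrite nr // n0 //; split=> [-> | rx0]; first exact: iso_on0 iso.
  by apply: r_inj; rewrite ?(iso_on0 sH iso) //; apply: subgroup0.
split; first by move=> _ /r_surj [x Hx <-]; rewrite -(iso_onN sH iso) ?nr ?nN //; apply: subgroupN.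
split.
  move=> _ _ /r_surj [x Hx <-] /r_surj [y Hy <-].
  by rewrite -rD ?nr //; [apply: nD | apply: subgroupD].
move=> rho; have [s s_ball] := nball rho; exists [seq r x | x <- s].
by move=> _ /r_surj [x Hx <-]; rewrite nr // => /(s_ball x Hx) xs; apply: map_f.
Qed.

Lemma chain_transferK (G G' : zmodType) (H : G -> Prop) (H' : G' -> Prop)
    (g : nat -> G) (g' : nat -> G') (m : nat -> nat) (r : G -> G') (s : G' -> G) :
  subgroup H -> (forall x, odd_order_mod H x) ->
  (forall i, (1 <= i)%N -> has_index (chain_level H g i) (chain_level H g i.-1) (m i)) ->
  (forall x, exists i, chain_level H g i x) ->
  subgroup H' -> (forall y, odd_order_mod H' y) ->
  (forall i, (1 <= i)%N -> has_index (chain_level H' g' i) (chain_level H' g' i.-1) (m i)) ->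
  (forall x, H x -> H' (r x)) -> (forall x, H x -> s (r x) = x) ->
  cancel (chain_transfer H g m g' r) (chain_transfer H' g' m g s).
Proof.
move=> sH Hodd index_m cover sH' Hodd' index_m' rH srK x.
have [i /(chain_repr_exists sH Hodd index_m) [h [c [Hh dc ex]]]] := cover x.
rewrite (chain_transferE g' r sH Hodd index_m Hh dc ex).
by rewrite (chain_transferE g s sH' Hodd' index_m' (rH _ Hh) dc erefl) srK.
Qed.

Theorem mainTheorem15 (R : realType) (G G' : zmodType)
  (H : G -> Prop) (H' : G' -> Prop) (r : G -> G')
  (nH : G -> R) (nH' : G' -> R) (g : nat -> G) (g' : nat -> G')
  (m : nat -> nat) (K K' : nat -> R) :
  countable_type G -> countable_type G' ->
  subgroup H -> subgroup H' ->
  (forall x, odd_order_mod H x) -> (forall x', odd_order_mod H' x') ->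
  iso_on H H' r ->
  proper_norm H nH ->
  (forall x, H x -> nH' (r x) = nH x) ->
  one_step_chain H g -> one_step_chain H' g' ->
  (forall i, (1 <= i)%N -> has_index (chain_level H g i) (chain_level H g i.-1) (m i)) ->
  (forall i, (1 <= i)%N -> has_index (chain_level H' g' i) (chain_level H' g' i.-1) (m i)) ->
  admissible H g m nH K -> admissible H' g' m nH' K' ->
  exists f : G -> G', bijective f /\
    coarse_equivalence (gdist H g m nH K) (gdist H' g' m nH' K') f.
Proof.
move=> _ _ sH sH' Hodd Hodd' iso pnH nH'r [_ cover] [_ cover'] index_m index_m' admK admK'.
have [s [iso' srK rsK]] := iso_on_inv sH iso.
have pnH' := proper_norm_transport sH iso pnH nH'r.
have [[rH [rD _]] [sH_H [sD _]]] := (iso, iso').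
pose f := chain_transfer H g m g' r; pose f' := chain_transfer H' g' m g s.
have fK : cancel f f' by apply: chain_transferK.
have f'K : cancel f' f by apply: chain_transferK.
exists f; split; first by exists f'.
split; first exact: (chain_transfer_coarse g' sH Hodd index_m cover pnH admK rD H' nH' K').
exists f'; split.
  exact: (chain_transfer_coarse g sH' Hodd' index_m' cover' pnH' admK' sD H nH K).
split; first by exists (gdist H g m nH K 0 0) => x; rewrite fK /gdist !subrr.
by exists (gdist H' g' m nH' K' 0 0) => y; rewrite f'K /gdist !subrr.
Qed.
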